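(* There exist a connected continuous-time interconnection $\Gamma=[\gamma_{ij}]\in\mathbb{R}^{p\times p}$ and a map $Q:\mathbb{R}\to\overline{\mathcal Q}_n$ satisfying $$\liminf_{T\to\infty}\frac1T\,\sigma_{\min}\Big(\int_0^TQ_t\,dt\Big)>0$$ such that the solutions $x_i(\cdot)$ of $\dot x_i=Q_t\sum_{j\ne i}\gamma_{ij}(x_j-x_i)$ do not synchronize (for some initial condition).
   Context: $\sigma_{\min}$ smallest singular value; $\overline{\mathcal Q}_n$ the set of symmetric positive semidefinite $n\times n$ matrices with induced 2-norm at most $1$. Continuous-time interconnection: $\gamma_{ij}\ge0$ ($i\ne j$), $\gamma_{ii}=-\sum_{j\ne i}\gamma_{ij}$; graph edge $(n_i,n_j)$ iff $\gamma_{ij}>0$; connected if some node is reachable by a directed path from every other node. Functions $x_i$ synchronize if there is $\bar x$ with $|x_i(t)-\bar x(t)|\to0$ as $t\to\infty$ for all $i$. *)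

From HB Require Import structures.
From mathcomp Require Import all_boot all_order all_algebra.
From mathcomp Require Import all_classical all_reals all_analysis.
Set Implicit Arguments. Unset Strict Implicit. Unset Printing Implicit Defensive.
Import Order.TTheory GRing.Theory Num.Theory.
Import numFieldNormedType.Exports.
Local Open Scope classical_set_scope.
Local Open Scope ring_scope.

Section Defs.
Variable R : realType.

Definition norm2 (n : nat) (v : 'cV[R]_n) : R := Num.sqrt (\sum_k (v k 0) ^+ 2).

Definition Qbar (n : nat) (A : 'M[R]_n) : Prop :=
  A^T = A /\
  (forall v : 'cV[R]_n, 0 <= (v^T *m A *m v) 0 0) /\
  (forall v : 'cV[R]_n, norm2 (A *m v) <= norm2 v).

Definition sigma_min (n : nat) (A : 'M[R]_n) : R :=
  inf [set norm2 (A *m v) | v in [set v : 'cV[R]_n | norm2 v = 1]].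

Definition mx_integral (n : nat) (Q : R -> 'M[R]_n) (a b : R) : 'M[R]_n :=
  \matrix_(i, j) Rintegral lebesgue_measure `[a, b] (fun t => Q t i j).

Definition interconnection (p : nat) (G : 'M[R]_p) : Prop :=
  (forall i j : 'I_p, i != j -> 0 <= G i j) /\
  (forall i : 'I_p, G i i = - \sum_(j | j != i) G i j).

Definition ic_edge (p : nat) (G : 'M[R]_p) : rel 'I_p :=
  fun i j => 0 < G i j.

Definition ic_connected (p : nat) (G : 'M[R]_p) : Prop :=
  exists r : 'I_p, forall i : 'I_p, connect (ic_edge G) i r.

Definition liminf_pos (f : R -> R) : Prop :=
  exists c : R, 0 < c /\ exists T0 : R, forall T, T0 <= T -> c <= f T.

Definition consensus_rhs (p n : nat) (G : 'M[R]_p) (Q : R -> 'M[R]_n)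
    (x : 'I_p -> R -> 'cV[R]_n) (i : 'I_p) (t : R) : 'cV[R]_n :=
  Q t *m (\sum_(j | j != i) G i j *: (x j t - x i t)).

(* x is a (Caratheodory / absolutely continuous) solution on [0, oo):
   x_i(t) = x_i(0) + int_0^t rhs_i(s) ds, the integrand being integrable. *)
Definition is_solution (p n : nat) (G : 'M[R]_p) (Q : R -> 'M[R]_n)
    (x : 'I_p -> R -> 'cV[R]_n) : Prop :=
  forall (i : 'I_p) (t : R), 0 <= t ->
    (forall k : 'I_n, lebesgue_measure.-integrable `[0, t]
        (fun s => (consensus_rhs G Q x i s k 0)%:E)) /\
    x i t = x i 0 + \col_k Rintegral lebesgue_measure `[0, t]
                       (fun s => consensus_rhs G Q x i s k 0).

Definition synchronize (p n : nat) (x : 'I_p -> R -> 'cV[R]_n) : Prop :=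
  exists xbar : R -> 'cV[R]_n,
    forall i : 'I_p, norm2 (x i t - xbar t) @[t --> +oo] --> 0.
End Defs.

(* Two agents: agent 1 rests at the origin and agent 0 follows it, xdot = - Q_t x.
   Take Q_t = Rot(θ) [[ρ(u), -u/4], [-u/4, 1/2]] Rot(θ)^T with u = 1/(1 + t),
   θ = ln(1 + t)/4 and ρ(u) = u^2/(1 + u).  Along e = (cos θ, sin θ) the radius
   r = 1 + u solves r' = - ρ r, and the off-diagonal entry turns e at the rate
   θ' = u/4; hence x(t) = (1 + u) e(t) solves the dynamics and stays at distance
   at least 1 from agent 1, so the agents do not synchronize.
   Still, Q_t is symmetric with spectrum in [0, 1] and v^T Q_t v >= <v, e(t)^⊥>^2/4.
   As θ -> oo, e(t) keeps sweeping the circle and the integral of this lower bound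
   is T/80 - O(1), so σ_min(∫_0^T Q) >= T/160 for T >= 36. *)

From HB Require Import structures.
From mathcomp Require Import all_boot all_order all_algebra.
From mathcomp Require Import all_classical all_reals all_analysis.
From mathcomp Require Import ring lra.
Import Order.TTheory GRing.Theory Num.Theory.
Import numFieldNormedType.Exports.
Local Open Scope classical_set_scope.
Local Open Scope ring_scope.

Section Euclidean.
Context {R : realType}.

Lemma norm2_ge0 {n} (v : 'cV[R]_n) : 0 <= norm2 v.
Proof. exact: sqrtr_ge0. Qed.

Lemma norm2_sqr {n} (v : 'cV[R]_n) : norm2 v ^+ 2 = \sum_k v k 0 ^+ 2.
Proof. by rewrite /norm2 sqr_sqrtr // sumr_ge0 // => k _; rewrite sqr_ge0. Qed.

Lemma norm2_eq0 {n} (v : 'cV[R]_n) : norm2 v = 0 -> forall k, v k 0 = 0.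
Proof.
move=> v0 k; apply/eqP; rewrite -sqrf_eq0; apply/eqP.
by apply: (psumr_eq0P _ (_ : \sum_k v k 0 ^+ 2 = 0)) => // [j _|];
  rewrite ?sqr_ge0 // -norm2_sqr v0 expr0n.
Qed.

Lemma norm2N {n} (v : 'cV[R]_n) : norm2 (- v) = norm2 v.
Proof. by rewrite /norm2; under eq_bigr do rewrite mxE sqrrN. Qed.

Lemma cauchy_schwarz_norm2 {n} (v w : 'cV[R]_n) :
  \sum_k v k 0 * w k 0 <= norm2 v * norm2 w.
Proof.
set a := norm2 v; set b := norm2 w; set S := \sum_k v k 0 * w k 0.
have [ab0|ab_gt0] := eqVneq (a * b) 0.
  move/eqP: (ab0); rewrite mulf_eq0 => /orP[/eqP v0|/eqP w0].
  - by rewrite /S big1 ?ab0 // => k _; rewrite (norm2_eq0 v v0) mul0r.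
  - by rewrite /S big1 ?ab0 // => k _; rewrite (norm2_eq0 w w0) mulr0.
have ab_pos : 0 < a * b by rewrite lt_def ab_gt0 mulr_ge0 ?norm2_ge0.
have : 0 <= \sum_k (b * v k 0 - a * w k 0) ^+ 2 by rewrite sumr_ge0 // => k _; rewrite sqr_ge0.
have -> : \sum_k (b * v k 0 - a * w k 0) ^+ 2 = 2 * (a * b) * (a * b - S).
  rewrite (eq_bigr (fun k => b ^+ 2 * v k 0 ^+ 2 + a ^+ 2 * w k 0 ^+ 2
                               - 2 * (a * b) * (v k 0 * w k 0))); last first.
    by move=> k _; ring.
  rewrite sumrB big_split /= -!mulr_sumr -!norm2_sqr -/a -/b -/S; ring.
by rewrite pmulr_rge0 ?subr_ge0 // mulr_gt0.
Qed.

Lemma norm2D_le {n} (v w : 'cV[R]_n) : norm2 (v + w) <= norm2 v + norm2 w.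
Proof.
rewrite -(@ler_pXn2r _ 2) ?nnegrE ?addr_ge0 ?norm2_ge0 //.
rewrite sqrrD !norm2_sqr.
rewrite (eq_bigr (fun k => v k 0 ^+ 2 + w k 0 ^+ 2 + 2 * (v k 0 * w k 0))); last first.
  by move=> k _; rewrite !mxE; ring.
rewrite !big_split /= -mulr_sumr mulr2n.
have := cauchy_schwarz_norm2 v w; lra.
Qed.

Lemma quadformE {n} (A : 'M[R]_n) (v : 'cV[R]_n) :
  (v^T *m A *m v) 0 0 = \sum_i \sum_j v i 0 * A i j * v j 0.
Proof.
rewrite mxE (exchange_big) /=; apply: eq_bigr => j _; rewrite mxE mulr_suml.
by apply: eq_bigr => i _; rewrite !mxE.
Qed.

Lemma sigma_min_ge_quadform {n} (A : 'M[R]_n.+1) (m : R) :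
  (forall v : 'cV[R]_n.+1, norm2 v = 1 -> m <= (v^T *m A *m v) 0 0) ->
  m <= sigma_min A.
Proof.
move=> Am; apply: lb_le_inf.
  pose e : 'cV[R]_n.+1 := \col_k (k == 0)%:R.
  exists (norm2 (A *m e)), e => //=.
  rewrite /norm2 (bigD1 0) //= big1 ?mxE ?eqxx ?expr1n ?addr0 ?sqrtr1 //.
  by move=> k /negbTE k0; rewrite mxE k0 expr0n.
move=> _ [v /= v1 <-]; apply: (le_trans (Am v v1)).
rewrite -mulmxA mxE -[X in _ <= X]mul1r -v1.
under eq_bigr do rewrite [_^T _ _]mxE.
exact: cauchy_schwarz_norm2.
Qed.

End Euclidean.

Lemma not_synchronize_apart (R : realType) (p n : nat) (x : 'I_p -> R -> 'cV[R]_n)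
    (i j : 'I_p) (d : R) : 0 < d ->
  (\forall t \near +oo, d <= norm2 (x i t - x j t)) -> ~ synchronize x.
Proof.
move=> d0 apart [xb xbP].
have d2 : 0 < d / 2 by rewrite divr_gt0.
have : \forall t \near +oo,
    [/\ d <= norm2 (x i t - x j t), norm2 (x i t - xb t) < d / 2
       & norm2 (x j t - xb t) < d / 2].
  near=> t; split; [near: t; exact: apart|near: t..].
  - exact: cvgr_lt (xbP i) _ d2.
  - exact: cvgr_lt (xbP j) _ d2.
move=> /filter_ex[t [dt ti tj]].
have : norm2 (x i t - x j t) <= norm2 (x i t - xb t) + norm2 (x j t - xb t).
  have -> : x i t - x j t = (x i t - xb t) + - (x j t - xb t).
    by rewrite opprB addrA subrK.
  by rewrite -[X in _ <= _ + X](norm2N (x j t - xb t)) norm2D_le.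
lra.
Unshelve. all: by end_near.
Qed.

Section Calculus.
Context {R : realType}.
Implicit Types (f g F : R -> R) (x : R).
Notation mu := (@lebesgue_measure R).

Lemma integrableR_sum (D : set R) (I : Type) (s : seq I) (f : I -> R -> R) :
  measurable D -> (forall i, mu.-integrable D (EFin \o f i)) ->
  mu.-integrable D (EFin \o fun x => \sum_(i <- s) f i x).
Proof.
move=> mD fi; have := @integrable_sum _ _ _ mu _ mD _ s xpredT _ (fun k _ => fi k).
by apply: eq_integrable => // x _; rewrite /= sumEFin.
Qed.

Lemma Rintegral_sum (D : set R) (I : Type) (s : seq I) (f : I -> R -> R) :
  measurable D -> (forall i, mu.-integrable D (EFin \o f i)) ->
  \int[mu]_(x in D) (\sum_(i <- s) f i x) = \sum_(i <- s) \int[mu]_(x in D) f i x.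
Proof.
move=> mD fi; elim: s => [|i s IH].
  by under eq_Rintegral do rewrite big_nil; rewrite big_nil Rintegral_cst // mul0r.
under eq_Rintegral do rewrite big_cons.
by rewrite big_cons RintegralD // ?IH // integrableR_sum.
Qed.

Section Quadform.
Variables (n : nat) (Q : R -> 'M[R]_n) (a b : R) (v : 'cV[R]_n).
Hypothesis Q_integrable :
  forall i j, mu.-integrable `[a, b] (EFin \o fun t => Q t i j).

Let mab : measurable (`[a, b] : set R). Proof. by []. Qed.

Let entry_integrable i j :
  mu.-integrable `[a, b] (EFin \o fun t => v i 0 * Q t i j * v j 0).
Proof.
have := @integrableZl _ _ _ mu _ mab (v i 0 * v j 0) _ (Q_integrable i j).
by apply: eq_integrable => // t _; rewrite /= -EFinM; congr EFin; ring.
Qed.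

Lemma integrable_quadform :
  mu.-integrable `[a, b] (EFin \o fun t => (v^T *m Q t *m v) 0 0).
Proof.
rewrite (_ : (fun t => _) = fun t => \sum_i \sum_j v i 0 * Q t i j * v j 0).
  by apply: integrableR_sum => // i; apply: integrableR_sum => // j; exact: entry_integrable.
by apply/funext => t; rewrite quadformE.
Qed.

Lemma Rintegral_quadform :
  (v^T *m mx_integral Q a b *m v) 0 0 =
  \int[mu]_(t in `[a, b]) (v^T *m Q t *m v) 0 0.
Proof.
under eq_Rintegral do rewrite quadformE.
rewrite quadformE Rintegral_sum // => [|i]; last first.
  by apply: integrableR_sum => // j; exact: entry_integrable.
apply: eq_bigr => i _; rewrite Rintegral_sum //; apply: eq_bigr => j _.
under eq_Rintegral do rewrite mulrAC.
by rewrite RintegralZl ?mxE 1?mulrAC // Q_integrable.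
Qed.

End Quadform.

Lemma is_derive_continuous {f x df} : is_derive x 1 f df -> {for x, continuous f}.
Proof. by move=> [fx _]; exact/differentiable_continuous/derivable1_diffP. Qed.

Lemma integrable_continuous_itv0 f T : (forall x, 0 <= x -> {for x, continuous f}) ->
  mu.-integrable `[0, T] (EFin \o f).
Proof.
move=> cf; apply: continuous_compact_integrable; first exact: segment_compact.
apply: continuous_in_subspaceT => x; rewrite inE /= in_itv /= => /andP[x0 _].
exact: cf.
Qed.

Lemma Rintegral_itv0_derive f F T : 0 <= T ->
  (forall x, 0 <= x -> is_derive x 1 F (f x)) ->
  (forall x, 0 <= x -> {for x, continuous f}) ->
  \int[mu]_(t in `[0, T]) f t = F T - F 0.
Proof.
move=> T0 dF cf; move: T0; rewrite le_eqVlt => /predU1P[<-|T0].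
  by rewrite set_itv1 Rintegral_set1 subrr.
have Fcont x : 0 <= x -> {for x, continuous F}.
  by move=> x0; exact: is_derive_continuous (dF x x0).
rewrite /Rintegral (@continuous_FTC2 _ _ F) //.
- apply: continuous_in_subspaceT => x; rewrite inE /= in_itv /= => /andP[x0 _].
  exact: cf.
- split.
  + by move=> x; rewrite in_itv /= => /andP[x0 _]; case: (dF x (ltW x0)).
  + exact/cvg_at_right_filter/Fcont.
  + exact/cvg_at_left_filter/Fcont/ltW.
- move=> x; rewrite in_itv /= => /andP[x0 _].
  by rewrite derive1E; case: (dF x (ltW x0)) => _ ->.
Qed.

(* The library rules, restated for functions written as lambda terms: this is
   the shape [derive_tac] matches on. *)
Lemma is_deriveDf {f g x df dg} : is_derive x 1 f df -> is_derive x 1 g dg ->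
  is_derive x 1 (fun t => f t + g t) (df + dg).
Proof. by move=> *; exact: is_deriveD. Qed.

Lemma is_deriveBf {f g x df dg} : is_derive x 1 f df -> is_derive x 1 g dg ->
  is_derive x 1 (fun t => f t - g t) (df - dg).
Proof. by move=> *; exact: is_deriveB. Qed.

Lemma is_deriveNf {f x df} : is_derive x 1 f df -> is_derive x 1 (fun t => - f t) (- df).
Proof. by move=> *; exact: is_deriveN. Qed.

Lemma is_deriveMf {f g x df dg} : is_derive x 1 f df -> is_derive x 1 g dg ->
  is_derive x 1 (fun t => f t * g t) (f x * dg + g x * df).
Proof. by move=> *; exact: is_deriveM. Qed.

Lemma is_deriveX2f {f x df} : is_derive x 1 f df ->
  is_derive x 1 (fun t => f t ^+ 2) (2 * f x * df).
Proof.
move=> fx; have := is_deriveMf fx fx.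
under [fun t => f t * f t]funext do rewrite -expr2.
by move=> h; apply: (is_derive_eq h); ring.
Qed.

Lemma is_deriveVf {f x df} : f x != 0 -> is_derive x 1 f df ->
  is_derive x 1 (fun t => (f t)^-1) (- (f x)^-2 * df).
Proof. by move=> *; exact: is_deriveV. Qed.

Lemma is_derive_cosf {f x df} : is_derive x 1 f df ->
  is_derive x 1 (fun t => cos (f t)) (- sin (f x) * df).
Proof. by move=> fx; exact: (@is_derive1_comp _ cos f). Qed.

Lemma is_derive_sinf {f x df} : is_derive x 1 f df ->
  is_derive x 1 (fun t => sin (f t)) (cos (f x) * df).
Proof. by move=> fx; exact: (@is_derive1_comp _ sin f). Qed.

Lemma is_derive_lnf {f x df} : 0 < f x -> is_derive x 1 f df ->
  is_derive x 1 (fun t => ln (f t)) ((f x)^-1 * df).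
Proof. by move=> fx0 fx; exact: (is_derive1_comp (is_derive1_ln fx0) fx). Qed.

End Calculus.

Ltac derive_tac := lazymatch goal with
 | |- is_derive _ _ (fun t => @?f t + @?g t) _ => eapply (is_deriveDf (f:=f) (g:=g))
 | |- is_derive _ _ (fun t => @?f t - @?g t) _ => eapply (is_deriveBf (f:=f) (g:=g))
 | |- is_derive _ _ (fun t => - @?f t) _ => eapply (is_deriveNf (f:=f))
 | |- is_derive _ _ (fun t => @?f t * @?g t) _ => eapply (is_deriveMf (f:=f) (g:=g))
 | |- is_derive _ _ (fun t => (@?f t)^-1) _ => eapply (is_deriveVf (f:=f))
 | |- is_derive _ _ (fun t => cos (@?f t)) _ => eapply (is_derive_cosf (f:=f))
 | |- is_derive _ _ (fun t => sin (@?f t)) _ => eapply (is_derive_sinf (f:=f))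
 | |- is_derive _ _ (fun t => ln (@?f t)) _ => eapply (is_derive_lnf (f:=f))
 | |- is_derive _ _ (fun t => (@?f t) ^+ 2) _ => eapply (is_deriveX2f (f:=f))
 | |- is_derive _ _ (fun t => t) _ => eapply is_derive_id
 | |- is_derive _ _ (fun t => _) _ => eapply is_derive_cst
 end.

Notation i0 := (@ord0 1).
Notation i1 := (@ord_max 1).

Lemma ord2P (i : 'I_2) : i = i0 \/ i = i1.
Proof. by case: i => [[|[|m]] h]; [left|right|]; try exact/val_inj. Qed.

Lemma sum_ord2 (V : nmodType) (f : 'I_2 -> V) : \sum_k f k = f i0 + f i1.
Proof. by rewrite big_ord_recr big_ord1; congr (f _ + f _); exact/val_inj. Qed.

Lemma sum_neq_ord2 (V : nmodType) (f : 'I_2 -> V) (i : 'I_2) :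
  \sum_(j | j != i) f j = f (if i == i0 then i1 else i0).
Proof.
rewrite big_mkcond sum_ord2.
by case: (ord2P i) => -> /=; rewrite ?add0r ?addr0.
Qed.

Section TwoDim.
Context {R : realType}.

Lemma norm2_sqr2 (v : 'cV[R]_2) : norm2 v ^+ 2 = v i0 0 ^+ 2 + v i1 0 ^+ 2.
Proof. by rewrite norm2_sqr sum_ord2. Qed.

Lemma mulmx2 (A : 'M[R]_2) (v : 'cV[R]_2) i :
  (A *m v) i 0 = A i i0 * v i0 0 + A i i1 * v i1 0.
Proof. by rewrite mxE sum_ord2. Qed.

Lemma quadform2 (A : 'M[R]_2) (v : 'cV[R]_2) : (v^T *m A *m v) 0 0 =
  v i0 0 ^+ 2 * A i0 i0 + v i0 0 * v i1 0 * (A i0 i1 + A i1 i0) + v i1 0 ^+ 2 * A i1 i1.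
Proof. by rewrite quadformE !sum_ord2; ring. Qed.

End TwoDim.

Section Example.
Context {R : realType}.
Notation mu := (@lebesgue_measure R).

Definition rho (u : R) := u ^+ 2 / (1 + u).

(* Entries of Rot(θ) [[rho u, -u/4], [-u/4, 1/2]] Rot(θ)^T, with c = cos θ, s = sin θ. *)
Definition qxx (c s u : R) := rho u * c ^+ 2 + s ^+ 2 / 2 + u / 2 * c * s.
Definition qxy (c s u : R) := rho u * c * s - c * s / 2 - u / 4 * (c ^+ 2 - s ^+ 2).
Definition qyy (c s u : R) := rho u * s ^+ 2 + c ^+ 2 / 2 - u / 2 * c * s.

Lemma rho_bounds {u : R} : 0 <= u <= 1 -> u ^+ 2 / 2 <= rho u <= 1 / 2.
Proof.
move=> /andP[u0 u1]; have u1_gt0 : 0 < 1 + u by lra.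
by rewrite /rho ler_pdivlMr // ler_pdivrMr //; apply/andP; split; nra.
Qed.

Lemma qform_ge_orth (c s u a b : R) : 0 <= u <= 1 ->
  (b * c - a * s) ^+ 2 / 4 <=
  a ^+ 2 * qxx c s u + a * b * (qxy c s u + qxy c s u) + b ^+ 2 * qyy c s u.
Proof.
move=> u01; have /andP[rho_ge rho_le] := rho_bounds u01.
have -> : a ^+ 2 * qxx c s u + a * b * (qxy c s u + qxy c s u) + b ^+ 2 * qyy c s u
  = rho u * (a * c + b * s) ^+ 2 + (b * c - a * s) ^+ 2 / 2
    - u * (a * c + b * s) * (b * c - a * s) / 2.
  by rewrite /qxx /qxy /qyy; field.
move: (a * c + b * s) (b * c - a * s) => al be.
have h3 : 0 <= (rho u - u ^+ 2 / 2) * al ^+ 2 by rewrite mulr_ge0 ?subr_ge0 ?sqr_ge0.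
have h4 : 0 <= (u * al - be / 2) ^+ 2 by exact: sqr_ge0.
have h5 : 0 <= be ^+ 2 by exact: sqr_ge0.
nra.
Qed.

Lemma qmul_norm_le (c s u a b : R) : c ^+ 2 + s ^+ 2 = 1 -> 0 <= u <= 1 ->
  (qxx c s u * a + qxy c s u * b) ^+ 2 + (qxy c s u * a + qyy c s u * b) ^+ 2
    <= a ^+ 2 + b ^+ 2.
Proof.
move=> cs1 u01; have /andP[rho_ge rho_le] := rho_bounds u01.
have -> : (qxx c s u * a + qxy c s u * b) ^+ 2 + (qxy c s u * a + qyy c s u * b) ^+ 2
  = ((rho u * (a * c + b * s) - u * (b * c - a * s) / 4) ^+ 2
     + ((b * c - a * s) / 2 - u * (a * c + b * s) / 4) ^+ 2) * (c ^+ 2 + s ^+ 2).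
  by rewrite /qxx /qxy /qyy; field.
have -> : a ^+ 2 + b ^+ 2 = (a * c + b * s) ^+ 2 + (b * c - a * s) ^+ 2.
  by rewrite -[a ^+ 2 + b ^+ 2]mulr1 -cs1; ring.
rewrite cs1 mulr1; move: (a * c + b * s) (b * c - a * s) => al be.
move: u01 => /andP[u0 u1].
have k1 : 0 <= (rho u * al + u * be / 4) ^+ 2 by exact: sqr_ge0.
have k2 : 0 <= (be / 2 + u * al / 4) ^+ 2 by exact: sqr_ge0.
have k3 : 0 <= (1 / 4 - rho u ^+ 2) * al ^+ 2 by rewrite mulr_ge0 ?sqr_ge0 //; nra.
have k4 : 0 <= (1 - u ^+ 2) * al ^+ 2 by rewrite mulr_ge0 ?sqr_ge0 //; nra.
have k5 : 0 <= (1 - u ^+ 2) * be ^+ 2 by rewrite mulr_ge0 ?sqr_ge0 //; nra.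
have k6 : 0 <= al ^+ 2 by exact: sqr_ge0.
have k7 : 0 <= be ^+ 2 by exact: sqr_ge0.
nra.
Qed.

Definition rate (t : R) := (1 + t)^-1.
Definition angle (t : R) := ln (1 + t) / 4.
Definition cosa (t : R) := cos (angle t).
Definition sina (t : R) := sin (angle t).

Definition Qpos (t : R) : 'M[R]_2 :=
  let q := fun f => f (cosa t) (sina t) (rate t) in
  \matrix_(i, j) if i == i0 then (if j == i0 then q qxx else q qxy)
                 else (if j == i0 then q qxy else q qyy).

(* Only t >= 0 matters; [|t|] extends Q continuously to the whole line. *)
Definition Qex (t : R) := Qpos `|t|.

Lemma rate_gt0 {t : R} : -1 < t -> 0 < rate t.
Proof. by move=> t1; rewrite invr_gt0; lra. Qed.

Lemma rate_bounds {t : R} : 0 <= t -> 0 <= rate t <= 1.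
Proof. by move=> t0; rewrite invr_ge0 invf_le1; lra. Qed.

Lemma cosa_sina (t : R) : cosa t ^+ 2 + sina t ^+ 2 = 1.
Proof. by rewrite cos2sin2 subrK. Qed.

Ltac rate_side t1 := have := rate_gt0 t1; rewrite /rate => ?;
  first [lra | apply: lt0r_neq0; lra].

Lemma QposE (t : R) : let c := cosa t in let s := sina t in let u := rate t in
  [/\ Qpos t i0 i0 = qxx c s u, Qpos t i0 i1 = qxy c s u,
      Qpos t i1 i0 = qxy c s u & Qpos t i1 i1 = qyy c s u].
Proof. by rewrite !mxE. Qed.

Lemma Qbar_Qpos (t : R) : 0 <= t -> Qbar (Qpos t).
Proof.
move=> t0; have u01 := rate_bounds t0; have [E00 E01 E10 E11] := QposE t.
split; [|split].
- apply/matrixP => i j; rewrite mxE.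
  by case: (ord2P i) => ->; case: (ord2P j) => ->; rewrite ?E00 ?E01 ?E10 ?E11.
- move=> v; rewrite quadform2 E00 E01 E10 E11.
  by apply: le_trans _ (qform_ge_orth _ _ _ (v i0 0) (v i1 0) u01); rewrite divr_ge0 ?sqr_ge0.
- move=> v; rewrite /norm2 ler_wsqrtr // !sum_ord2 !mulmx2 E00 E01 E10 E11.
  exact: qmul_norm_le _ _ _ _ _ (cosa_sina t) u01.
Qed.

Lemma is_derive_Qpos (i j : 'I_2) (t : R) : -1 < t ->
  exists df : R, is_derive t 1 (fun x => Qpos x i j) df.
Proof.
move=> t1; have -> : (fun x => Qpos x i j) =
    if i == i0 then (if j == i0 then fun x => qxx (cosa x) (sina x) (rate x)
                     else fun x => qxy (cosa x) (sina x) (rate x))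
    else (if j == i0 then fun x => qxy (cosa x) (sina x) (rate x)
          else fun x => qyy (cosa x) (sina x) (rate x)).
  by apply/funext => x; rewrite mxE; case: (i == i0); case: (j == i0).
by case: (i == i0); case: (j == i0); eexists;
  rewrite /qxx /qxy /qyy /cosa /sina /angle /rate /rho; repeat derive_tac; rate_side t1.
Qed.

Lemma Qex_continuous (i j : 'I_2) : continuous (fun t => Qex t i j).
Proof.
move=> t; have t1 : -1 < `|t| by have := normr_ge0 t; lra.
have [df Qdf] := is_derive_Qpos i j _ t1.
change {for t, continuous ((fun x => Qpos x i j) \o (fun x : R => `|x|))}.
apply: continuous_comp; last exact: is_derive_continuous Qdf.
exact: (@norm_continuous _ R^o).
Qed.

Definition Gex : 'M[R]_2 :=
  \matrix_(i, j) if i == i0 then (if j == i0 then -1 else 1) else 0.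

Lemma Gex_connected_interconnection : interconnection Gex /\ ic_connected Gex.
Proof.
split; [split|].
- by move=> i j; case: (ord2P i) => ->; case: (ord2P j) => -> //= _; rewrite mxE.
- by move=> i; rewrite sum_neq_ord2; case: (ord2P i) => -> /=; rewrite !mxE /= ?opprK ?oppr0.
- exists i1 => i; case: (ord2P i) => ->; last exact: connect0.
  by apply: connect1; rewrite /ic_edge mxE /=.
Qed.

Definition traj_x (t : R) := (1 + rate t) * cosa t.
Definition traj_y (t : R) := (1 + rate t) * sina t.

Definition traj (i : 'I_2) (t : R) : 'cV[R]_2 :=
  if i == i0 then \col_k (if k == i0 then traj_x t else traj_y t) else 0.

Definition dtraj_x (t : R) := - (1 + rate t) * (rho (rate t) * cosa t + rate t / 4 * sina t).
Definition dtraj_y (t : R) := - (1 + rate t) * (rho (rate t) * sina t - rate t / 4 * cosa t).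

Lemma is_derive_traj_x (t : R) : -1 < t -> is_derive t 1 traj_x (dtraj_x t).
Proof.
move=> t1; eapply is_derive_eq.
  by rewrite /traj_x /cosa /sina /angle /rate; repeat derive_tac; rate_side t1.
rewrite /dtraj_x /rho /rate /cosa /sina /angle; have := rate_gt0 t1; rewrite /rate => ?.
by field; rate_side t1.
Qed.

Lemma is_derive_traj_y (t : R) : -1 < t -> is_derive t 1 traj_y (dtraj_y t).
Proof.
move=> t1; eapply is_derive_eq.
  by rewrite /traj_y /cosa /sina /angle /rate; repeat derive_tac; rate_side t1.
rewrite /dtraj_y /rho /rate /cosa /sina /angle; have := rate_gt0 t1; rewrite /rate => ?.
by field; rate_side t1.
Qed.

Lemma dtraj_x_continuous (t : R) : -1 < t -> {for t, continuous dtraj_x}.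
Proof.
move=> t1; have [df /is_derive_continuous //] : exists df, is_derive t 1 dtraj_x df.
by eexists; rewrite /dtraj_x /rho /cosa /sina /angle /rate; repeat derive_tac; rate_side t1.
Qed.

Lemma dtraj_y_continuous (t : R) : -1 < t -> {for t, continuous dtraj_y}.
Proof.
move=> t1; have [df /is_derive_continuous //] : exists df, is_derive t 1 dtraj_y df.
by eexists; rewrite /dtraj_y /rho /cosa /sina /angle /rate; repeat derive_tac; rate_side t1.
Qed.

Lemma consensus_rhs_traj0 (t : R) (k : 'I_2) : 0 <= t ->
  consensus_rhs Gex Qex traj i0 t k 0 = if k == i0 then dtraj_x t else dtraj_y t.
Proof.
move=> t0.
rewrite /consensus_rhs sum_neq_ord2 /= /Qex ger0_norm // mulmx2 !mxE /=.
rewrite /traj /= /traj_x /traj_y.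
have cs1 := cosa_sina t; have := rate_bounds t0 => /andP[u0 _].
case: (k == i0).
- transitivity (dtraj_x t * (cosa t ^+ 2 + sina t ^+ 2)); last by rewrite cs1 mulr1.
  by rewrite /dtraj_x /qxx /qxy; field; lra.
- transitivity (dtraj_y t * (cosa t ^+ 2 + sina t ^+ 2)); last by rewrite cs1 mulr1.
  by rewrite /dtraj_y /qxy /qyy; field; lra.
Qed.

Lemma consensus_rhs_traj1 (t : R) (k : 'I_2) : consensus_rhs Gex Qex traj i1 t k 0 = 0.
Proof. by rewrite /consensus_rhs sum_neq_ord2 /= (_ : Gex i1 i0 = 0) ?scale0r ?mulmx0 ?mxE. Qed.

Lemma traj_solution : is_solution Gex Qex traj.
Proof.
move=> i t t0; case: (ord2P i) => ->; last first.
  split=> [k|].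
    apply: (eq_integrable _ (cst 0)) => //; last exact: integrable0.
    by move=> s _; rewrite /= consensus_rhs_traj1.
  apply/matrixP => k l; rewrite !mxE.
  under eq_Rintegral do rewrite consensus_rhs_traj1.
  by rewrite Rintegral_cst // mul0r addr0.
have rhsE k : {in `[0, t]%classic, (fun s => consensus_rhs Gex Qex traj i0 s k 0)
                           =1 if k == i0 then dtraj_x else dtraj_y}.
  by move=> s; rewrite inE /= in_itv /= => /andP[s0 _]; rewrite consensus_rhs_traj0 //; case: (k == i0).
have dtraj_cont k s : 0 <= s -> {for s, continuous (if k == i0 then dtraj_x else dtraj_y)}.
  by move=> s0; case: (k == i0); [apply: dtraj_x_continuous | apply: dtraj_y_continuous]; lra.
split=> [k|].
  have := integrable_continuous_itv0 _ t (dtraj_cont k).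
  by apply: eq_integrable => // s sI; rewrite /= rhsE.
apply/matrixP => k l; rewrite (ord1 l) !mxE (eq_Rintegral mu (rhsE k)) /traj /=.
have traj_derive (s : R) : 0 <= s -> is_derive s 1 (if k == i0 then traj_x else traj_y)
                                 ((if k == i0 then dtraj_x else dtraj_y) s).
  by move=> s0; case: (k == i0); [apply: is_derive_traj_x | apply: is_derive_traj_y]; lra.
rewrite (Rintegral_itv0_derive _ _ _ t0 traj_derive (dtraj_cont k)).
by case: (k == i0); ring.
Qed.

Lemma traj_not_synchronize : ~ synchronize traj.
Proof.
apply: (@not_synchronize_apart _ _ _ _ i0 i1 1) => //; near=> t.
have t0 : 0 <= t by near: t; exact: nbhs_pinfty_ge.
rewrite /traj /= subr0 /norm2 sum_ord2 !mxE /= /traj_x /traj_y !exprMn -mulrDr cosa_sina.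
have := rate_bounds t0 => /andP[u0 _].
by rewrite mulr1 sqrtr_sqr ger0_norm; lra.
Unshelve. all: by end_near.
Qed.

Definition orth_sq (a b t : R) := (b * cosa t - a * sina t) ^+ 2 / 4.

Definition osc (a b c s : R) :=
  (b ^+ 2 - a ^+ 2) / 2 * ((c ^+ 2 - s ^+ 2) + (2 * c * s) / 2)
  - a * b * ((2 * c * s) - (c ^+ 2 - s ^+ 2) / 2).

(* In terms of the double angle 2θ, [orth_sq] is a constant plus a trigonometric
   polynomial in 2θ; since 2θ' = 1 / (2 (1 + t)), a primitive of the latter is
   (4/5) (1 + t) [osc].  The factors c^2 + s^2 = 1 keep the derivative identity
   polynomial. *)
Definition orth_sq_primitive (a b t : R) :=
  ((a ^+ 2 + b ^+ 2) * (cosa t ^+ 2 + sina t ^+ 2) / 2 * t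
   + 4 / 5 * (1 + t) * osc a b (cosa t) (sina t)) / 4.

Lemma is_derive_orth_sq_primitive (a b t : R) : -1 < t ->
  is_derive t 1 (orth_sq_primitive a b) (orth_sq a b t).
Proof.
move=> t1; eapply is_derive_eq.
  by rewrite /orth_sq_primitive /osc /cosa /sina /angle; repeat derive_tac; rate_side t1.
rewrite /orth_sq /cosa /sina /angle; have := rate_gt0 t1; rewrite /rate => ?.
by field; rate_side t1.
Qed.

Lemma orth_sq_continuous (a b t : R) : -1 < t -> {for t, continuous (orth_sq a b)}.
Proof.
move=> t1; have [df /is_derive_continuous //] : exists df, is_derive t 1 (orth_sq a b) df.
by eexists; rewrite /orth_sq /cosa /sina /angle; repeat derive_tac; rate_side t1.
Qed.

Lemma osc_bounds (a b c s : R) : a ^+ 2 + b ^+ 2 = 1 -> c ^+ 2 + s ^+ 2 = 1 ->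
  - (9 / 16) <= osc a b c s <= 9 / 16.
Proof.
move=> ab1 cs1.
set A := (b ^+ 2 - a ^+ 2) / 2; set B := a * b.
set C2 := c ^+ 2 - s ^+ 2; set S2 := 2 * c * s.
have oscE : osc a b c s = (A + B / 2) * C2 + (A / 2 - B) * S2.
  by rewrite /osc -/A -/B -/C2 -/S2; field.
have AB : A ^+ 2 + B ^+ 2 = 1 / 4.
  transitivity ((a ^+ 2 + b ^+ 2) ^+ 2 / 4); first by rewrite /A /B; field.
  by rewrite ab1 expr1n.
have CS : C2 ^+ 2 + S2 ^+ 2 = 1.
  transitivity ((c ^+ 2 + s ^+ 2) ^+ 2); first by rewrite /C2 /S2; ring.
  by rewrite cs1 expr1n.
have : osc a b c s ^+ 2 <= 5 / 16.
  have lagrange : ((A + B / 2) * C2 + (A / 2 - B) * S2) ^+ 2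
                  + ((A + B / 2) * S2 - (A / 2 - B) * C2) ^+ 2
                = 5 / 4 * (A ^+ 2 + B ^+ 2) * (C2 ^+ 2 + S2 ^+ 2) by field.
  have := sqr_ge0 ((A + B / 2) * S2 - (A / 2 - B) * C2).
  rewrite oscE; rewrite AB CS in lagrange; lra.
by move: (osc a b c s) => x x2; apply/andP; split; nra.
Qed.

Lemma integral_orth_sq_ge (a b T : R) : a ^+ 2 + b ^+ 2 = 1 -> 36 <= T ->
  T / 160 <= \int[mu]_(t in `[0, T]) orth_sq a b t.
Proof.
move=> ab1 T36.
have T0 : 0 <= T by lra.
have primP (x : R) : 0 <= x -> is_derive x 1 (orth_sq_primitive a b) (orth_sq a b x).
  by move=> x0; apply: is_derive_orth_sq_primitive; lra.
have contP (x : R) : 0 <= x -> {for x, continuous (orth_sq a b)}.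
  by move=> x0; apply: orth_sq_continuous; lra.
rewrite (Rintegral_itv0_derive _ _ _ T0 primP contP).
have /andP[oscT_ge _] := osc_bounds a b (cosa T) (sina T) ab1 (cosa_sina T).
have /andP[_ osc0_le] := osc_bounds a b (cosa 0) (sina 0) ab1 (cosa_sina 0).
rewrite /orth_sq_primitive ab1 !cosa_sina.
have : 0 <= (1 + T) * (osc a b (cosa T) (sina T) + 9 / 16) by rewrite mulr_ge0; lra.
nra.
Qed.

Lemma orth_sq_le_quadform (t : R) (v : 'cV[R]_2) : 0 <= t ->
  orth_sq (v i0 0) (v i1 0) t <= (v^T *m Qex t *m v) 0 0.
Proof.
move=> t0; rewrite quadform2 /Qex ger0_norm // !mxE /=.
exact: qform_ge_orth (rate_bounds t0).
Qed.

Lemma sigma_min_integral_Qex_ge (T : R) : 36 <= T ->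
  T / 160 <= sigma_min (mx_integral Qex 0 T).
Proof.
move=> T36; apply: sigma_min_ge_quadform => v v1.
have Q_integrable i j : mu.-integrable `[0, T] (EFin \o fun t => Qex t i j).
  by apply: integrable_continuous_itv0 => x _; exact: Qex_continuous.
rewrite Rintegral_quadform //.
have ab1 : v i0 0 ^+ 2 + v i1 0 ^+ 2 = 1 by rewrite -norm2_sqr2 v1 expr1n.
apply: le_trans (integral_orth_sq_ge _ _ _ ab1 T36) _.
apply: le_Rintegral => //.
- by apply: integrable_continuous_itv0 => x x0; apply: orth_sq_continuous; lra.
- exact: integrable_quadform.
- by move=> t; rewrite /= in_itv /= => /andP[t0 _]; exact: orth_sq_le_quadform.
Qed.

End Example.

Theorem theorem7 (R : realType) :
  exists (p n : nat) (G : 'M[R]_p) (Q : R -> 'M[R]_n),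
    [/\ interconnection G /\ ic_connected G,
        (forall t, Qbar (Q t)),
        (forall i j : 'I_n, measurable_fun setT (fun t => Q t i j)),
        liminf_pos (fun T => T^-1 * sigma_min (mx_integral Q 0 T)) &
        exists x : 'I_p -> R -> 'cV[R]_n,
          is_solution G Q x /\ ~ synchronize x].
Proof.
exists 2%N, 2%N, Gex, Qex; split.
- exact: Gex_connected_interconnection.
- by move=> t; apply: Qbar_Qpos; exact: normr_ge0.
- by move=> i j; apply: measurable_realfun.continuous_measurable_fun; exact: Qex_continuous.
- exists (1 / 160); split=> //; exists 36 => T T36.
  have -> : 1 / 160 = T^-1 * (T / 160) :> R by field; lra.
  by rewrite ler_wpM2l ?invr_ge0 ?sigma_min_integral_Qex_ge //; lra.
- by exists traj; split; [exact: traj_solution | exact: traj_not_synchronize].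
Qed.
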